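(* Let $(X,\Sigma,\mu)$ be a probability space, $K$ a closed subset of $2^\omega$, and $f,g\colon X\to K$ measurable functions with $f\neq g$ $\mu$-almost everywhere. Then for every $\varepsilon>0$ there is $L\in\Sigma$ such that $\mu(L)>1/4-\varepsilon$ and $f[L]\cap g[L]=\emptyset$. *)

From HB Require Import structures.
From mathcomp Require Import all_boot all_order all_algebra.
From mathcomp Require Import all_classical all_reals all_analysis.
Set Implicit Arguments. Unset Strict Implicit. Unset Printing Implicit Defensive.
Import Order.TTheory GRing.Theory Num.Theory.
Local Open Scope classical_set_scope.

(* The Cantor space 2^omega is mathcomp-analysis' [cantor_space]
   (= nat -> bool with the product topology). *)

Definition cantor_borel : set (set cantor_space) :=
  <<s [set: cantor_space], @open cantor_space >>.

Definition cantor_measurable (d : measure_display) (X : measurableType d)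
  (f : X -> cantor_space) : Prop :=
  forall B, cantor_borel B -> measurable (f @^-1` B).

From HB Require Import structures.
From mathcomp Require Import all_boot all_order all_algebra.
From mathcomp Require Import all_classical all_reals all_analysis.
From mathcomp Require Import lra.
Import Order.TTheory GRing.Theory Num.Theory.
Local Open Scope classical_set_scope.
Local Open Scope ring_scope.

(* Truncating f and g to their first N coordinates turns them into maps into
   the finite set V = 2^N.  The sets D_N where the two truncations differ
   increase to [f <> g], so mu(D_N) > 1 - 4 eps for N large.  Pushing mu
   forward along x |-> (f x|N, g x|N) weights the edges of the complete
   directed graph on V, and a greedy max-cut argument yields a colouring
   c : V -> bool whose directed cut (edges from colour false to colour true)
   carries a quarter of the off-diagonal weight mu(D_N).  Its preimage L
   works: truncations of points of f[L] are coloured false, those of points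
   of g[L] true. *)

Section directed_cut.
Context {R : realDomainType} {V : finType} (w : V * V -> R).

Definition cut_weight (c : V -> bool) : R := \sum_(e | c e.1 != c e.2) w e.

Definition dicut_weight (c : V -> bool) : R := \sum_(e | ~~ c e.1 && c e.2) w e.

(* Colour the vertices of [s] one at a time: each edge from the new vertex
   [v] to an earlier one is cut by exactly one of the two colours of [v], so
   one of them cuts at least half of the new weight. *)
Lemma cut_weight_half_seq (s : seq V) : uniq s -> exists c : V -> bool,
  \sum_(e | [&& e.1 != e.2, e.1 \in s & e.2 \in s]) w e
    <= 2 * \sum_(e | [&& c e.1 != c e.2, e.1 \in s & e.2 \in s]) w e.
Proof.
elim: s => [_ | v s IH /= /andP[vNs /IH[c cut_c]]].
  by exists xpredT; rewrite !big_pred0 ?mulr0 // => e; rewrite andbF.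
pose new e := [&& e.1 \in v :: s, e.2 \in v :: s & ~~ ((e.1 \in s) && (e.2 \in s))].
have split_new (P : pred (V * V)) :
    \sum_(e | [&& P e, e.1 \in v :: s & e.2 \in v :: s]) w e =
    \sum_(e | [&& P e, e.1 \in s & e.2 \in s]) w e + \sum_(e | P e && new e) w e.
  rewrite (bigID [pred e | (e.1 \in s) && (e.2 \in s)]) /=; congr (_ + _);
    apply: eq_bigl => e; rewrite /new !in_cons;
    by case: (P e) (e.1 == v) (e.1 \in s) (e.2 == v) (e.2 \in s) => [] [] [] [] [].
pose recolor b u := if u == v then b else c u.
pose star b := \sum_(e | (recolor b e.1 != recolor b e.2) && new e) w e.
have cut_old b : \sum_(e | [&& recolor b e.1 != recolor b e.2, e.1 \in s & e.2 \in s]) w e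
    = \sum_(e | [&& c e.1 != c e.2, e.1 \in s & e.2 \in s]) w e.
  apply: eq_bigl => -[p q] /=; rewrite /recolor.
  by case: (eqVneq p v) => [->|_]; case: (eqVneq q v) => [->|_];
    rewrite ?(negbTE vNs) ?andbF.
have star_sum : star true + star false = \sum_(e | (e.1 != e.2) && new e) w e.
  rewrite [RHS](bigID [pred e | recolor true e.1 != recolor true e.2]) /=.
  congr (_ + _); apply: eq_bigl => -[p q]; rewrite /new /recolor /= !in_cons;
    case: (eqVneq p v) => [->|pNv]; case: (eqVneq q v) => [->|_];
    rewrite ?pNv ?(negbTE vNs) //=;
    by case: (c p) (c q) (p \in s) (q \in s) (p == q) => [] [] [] [] [].
have [b star_b] : exists b, star true + star false <= 2 * star b.
  by case: (lerP (star false) (star true)) => ?; [exists true | exists false]; lra.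
by exists (recolor b); rewrite !split_new cut_old -/(star b) -star_sum; lra.
Qed.

Lemma cut_weight_half : exists c, \sum_(e | e.1 != e.2) w e <= 2 * cut_weight c.
Proof.
have [c] := @cut_weight_half_seq (enum V) (enum_uniq V).
rewrite /cut_weight; under eq_bigl do rewrite !mem_enum !andbT.
under [X in _ <= 2 * X]eq_bigl do rewrite !mem_enum !andbT.
by exists c.
Qed.

Lemma cut_weightE c : cut_weight c = dicut_weight c + dicut_weight (negb \o c).
Proof.
rewrite /cut_weight (bigID [pred e | c e.2]) /=.
by congr (_ + _); apply: eq_bigl => e /=; case: (c e.1) (c e.2) => [] [].
Qed.

Lemma dicut_weight_quarter : exists c, \sum_(e | e.1 != e.2) w e <= 4 * dicut_weight c.
Proof.
have [c cut_c] := cut_weight_half; rewrite cut_weightE in cut_c.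
have [le_cNc | lt_Ncc] := lerP (dicut_weight (negb \o c)) (dicut_weight c).
  by exists c; lra.
by exists (negb \o c); lra.
Qed.

End directed_cut.

Section finite_valued_map.
Context {d : measure_display} {X : measurableType d} {R : realType}.
Context {T : finType} {h : X -> T}.
Hypothesis mh : forall t, measurable (h @^-1` [set t]).

Let preimage_fibres (A : set T) : h @^-1` A = \bigcup_(t in A) h @^-1` [set t].
Proof. by apply/seteqP; split => [x Ahx | x [t At /= ->]] //; exists (h x). Qed.

Lemma measurable_preimage_fin (A : set T) : measurable (h @^-1` A).
Proof.
by rewrite preimage_fibres; apply: fin_bigcup_measurable => // t _; apply: mh.
Qed.

Lemma measure_preimage_fin (mu : {finite_measure set X -> \bar R}) (A : pred T) :
  mu (h @^-1` [set t | A t]) = (\sum_(t | A t) fine (mu (h @^-1` [set t])))%:E.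
Proof.
rewrite -sumEFin; under eq_bigr do rewrite fineK ?fin_num_measure //.
rewrite preimage_fibres measure_fin_bigcup //; last 2 first.
- exact: finite_finset.
- exact: trivIset_preimage1.
by rewrite -(bigfs _ (index_enum_uniq T)) // => t _; rewrite mem_index_enum.
Qed.

End finite_valued_map.

Lemma nondecreasing_measure_gt d (X : measurableType d) (R : realType)
    (mu : {measure set X -> \bar R}) (D : (set X)^nat) (r : \bar R) :
  (forall n, measurable (D n)) -> nondecreasing_seq D ->
  (r < mu (\bigcup_n D n))%E -> exists n, (r < mu (D n))%E.
Proof.
move=> mD ndD r_lt.
have [n _ /(_ n (leqnn n)) r_lt_n] :=
  nondecreasing_cvg_mu mD (bigcupT_measurable D mD) ndD (open_ereal_gt' r_lt).
by exists n.
Qed.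

Lemma probability_ae_eq1 d (X : measurableType d) (R : realType)
    (mu : probability X R) (P : X -> Prop) (A : set X) :
  {ae mu, forall x, P x} -> measurable A -> (forall x, P x -> A x) -> mu A = 1%E.
Proof.
move=> aeP mA PA.
have mCA : measurable (~` A) by apply: measurableC.
have CA0 : mu (~` A) = 0%E.
  by apply/negligibleP => //; apply: negligibleS aeP => x /= nAx Px; exact/nAx/PA.
by rewrite -[A]setCK probability_setC // CA0 sube0.
Qed.

Definition cantor_prefix n (y : cantor_space) : {ffun 'I_n -> bool} := [ffun i : 'I_n => y i].

Lemma cantor_prefix_eqP n a b :
  cantor_prefix n a = cantor_prefix n b <-> forall i, (i < n)%N -> a i = b i.
Proof.
split => [/ffunP ab i lt_in | ab]; last by apply/ffunP => i; rewrite !ffunE ab.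
by have := ab (Ordinal lt_in); rewrite !ffunE.
Qed.

Lemma cantor_prefix_neq_mono m n a b : (m <= n)%N ->
  cantor_prefix m a != cantor_prefix m b -> cantor_prefix n a != cantor_prefix n b.
Proof.
move=> le_mn; apply: contra => /eqP/cantor_prefix_eqP ab.
by apply/eqP/cantor_prefix_eqP => i lt_im; apply: ab; exact: leq_trans le_mn.
Qed.

Lemma cantor_prefix_separates a b :
  a != b -> exists n, cantor_prefix n a != cantor_prefix n b.
Proof.
move=> ab; suff [i abi] : exists i, a i != b i.
  by exists i.+1; apply: contra abi => /eqP/cantor_prefix_eqP/(_ i (ltnSn i)) ->.
apply: contra_notP (elimN eqP ab) => /forallNP ab_eq.
by apply/funext => i; apply/eqP/negPn/negP => /ab_eq.
Qed.

Lemma open_cantor_coord i (B : set bool) : open [set y : cantor_space | B (y i)].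
Proof.
have coord_cont : continuous (fun y : cantor_space => y i).
  exact: @proj_continuous nat (fun=> bool) i.
have := (continuousP _).1 coord_cont.
by apply; apply: discrete_open.
Qed.

Lemma cantor_measurable_prefix d (X : measurableType d) (f : X -> cantor_space) n
    (p : {ffun 'I_n -> bool}) :
  cantor_measurable f -> measurable [set x | cantor_prefix n (f x) = p].
Proof.
move=> mf; have -> : [set x | cantor_prefix n (f x) = p] =
    \bigcap_(i in [set: 'I_n]) f @^-1` [set y | y i = p i].
  apply/seteqP; split => [x <- i _ | x fp]; first by rewrite /= ffunE.
  by apply/ffunP => i; rewrite ffunE; exact: fp.
apply: fin_bigcap_measurable => [|i _]; first exact: finite_finset.
apply: (mf [set y | y i = p i]); apply: sub_sigma_algebra.
exact: (open_cantor_coord i (eq^~ (p i))).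
Qed.

Lemma cantor_measurable_prefix_pair d (X : measurableType d) (f g : X -> cantor_space)
    n (t : {ffun 'I_n -> bool} * {ffun 'I_n -> bool}) :
  cantor_measurable f -> cantor_measurable g ->
  measurable [set x | (cantor_prefix n (f x), cantor_prefix n (g x)) = t].
Proof.
move=> mf mg; have -> : [set x | (cantor_prefix n (f x), cantor_prefix n (g x)) = t] =
    [set x | cantor_prefix n (f x) = t.1] `&` [set x | cantor_prefix n (g x) = t.2].
  by apply/seteqP; split => [x <- | x [/= -> ->]] //; rewrite -surjective_pairing.
by apply: measurableI; apply: cantor_measurable_prefix.
Qed.

Theorem lemma7p8 (d : measure_display) (X : measurableType d) (R : realType)
  (mu : probability X R) (K : set cantor_space) (f g : X -> cantor_space) :
  closed K ->
  (forall x, K (f x)) -> (forall x, K (g x)) ->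
  cantor_measurable f -> cantor_measurable g ->
  {ae mu, forall x, f x <> g x} ->
  forall eps : R, 0 < eps ->
  exists L : set X, measurable L /\
    ((4%:R^-1 - eps)%:E < mu L)%E /\ f @` L `&` g @` L = set0.
Proof.
(* The argument only uses measurability of f and g. *)
move=> _ _ _ mf mg f_neq_g eps eps_gt0.
pose pp n x := (cantor_prefix n (f x), cantor_prefix n (g x)).
have mpp n t : measurable (pp n @^-1` [set t]).
  exact: cantor_measurable_prefix_pair.
pose D n := pp n @^-1` [set t | t.1 != t.2].
have mD n : measurable (D n) := measurable_preimage_fin (mpp n) _.
have D_full : mu (\bigcup_n D n) = 1%E.
  apply: probability_ae_eq1 f_neq_g (bigcupT_measurable _ mD) _ => x /eqP.
  by move=> /cantor_prefix_separates[n fg_n]; exists n.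
have [N DN] : exists N, ((1 - 4 * eps)%:E < mu (D N))%E.
  apply: nondecreasing_measure_gt mD _ _ => [m n le_mn|].
    by apply/subsetPset => x; exact: cantor_prefix_neq_mono.
  by rewrite [X in (_ < X)%E]D_full lte_fin; lra.
have [c dicut_c] := dicut_weight_quarter (fun t => fine (mu (pp N @^-1` [set t]))).
exists (pp N @^-1` [set t | ~~ c t.1 && c t.2]).
split; first exact: measurable_preimage_fin (mpp N) _.
split.
  move: DN; rewrite /D !(measure_preimage_fin (mpp N)) !lte_fin.
  by rewrite /dicut_weight in dicut_c; lra.
apply/seteqP; split => // y [[x1 /andP[cf1 _] <-] [x2 /andP[_ cg2] fg]].
by move: cf1; rewrite /pp /= -fg cg2.
Qed.
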